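(* Let $h=\prod_{i=1}^{t}p_i^{s_i}$ with distinct primes $p_i$, $s_i\ge1$, and let $1\leq r\leq m\leq n$. The independence number, clique number and chromatic number of $\mathrm{Bil}_r(\mathbb{Z}_h^{m\times n})$ are $$\alpha=h^{n(m-r)},\qquad\omega=h^{nr},\qquad\chi=h^{nr}.$$
   Context: $\mathbb{Z}_h$ is the residue class ring modulo $h$. The inner rank $\rho(A)$ of a nonzero $A\in\mathbb{Z}_h^{m\times n}$ is the least $r$ with $A=BC$, $B\in\mathbb{Z}_h^{m\times r}$, $C\in\mathbb{Z}_h^{r\times n}$; $\rho(0)=0$. $\mathrm{Bil}_r(\mathbb{Z}_h^{m\times n})$ is the graph with vertex set $\mathbb{Z}_h^{m\times n}$ in which distinct $A,B$ are adjacent iff $\rho(A-B)\leq r$. *)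

From HB Require Import structures.
From mathcomp Require Import all_boot all_order all_algebra.
Set Implicit Arguments. Unset Strict Implicit. Unset Printing Implicit Defensive.
Import GRing.Theory.
Local Open Scope ring_scope.

Definition factors_through (h m n : nat) (A : 'M['Z_h]_(m, n)) (r : nat) : bool :=
  [exists B : 'M['Z_h]_(m, r), exists C : 'M['Z_h]_(r, n), A == B *m C].

Lemma factors_through_ex (h m n : nat) (A : 'M['Z_h]_(m, n)) :
  exists r, factors_through A r.
Proof.
exists m; apply/existsP; exists 1%:M; apply/existsP; exists A.
by rewrite mul1mx.
Qed.

(* inner rank: least r with A = B C, B : m x r, C : r x n
   (for A = 0 this is 0, via the empty factorization). *)
Definition inner_rank (h m n : nat) (A : 'M['Z_h]_(m, n)) : nat :=
  ex_minn (factors_through_ex A).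

Definition bil_adj (h m n r : nat) : rel 'M['Z_h]_(m, n) :=
  fun A B => (A != B) && (inner_rank (A - B) <= r)%N.

Definition independent_set (T : finType) (e : rel T) (S : {set T}) : bool :=
  [forall x in S, forall y in S, ~~ e x y].

Definition clique (T : finType) (e : rel T) (S : {set T}) : bool :=
  [forall x in S, forall y in S, (x != y) ==> e x y].

Definition independence_number (T : finType) (e : rel T) : nat :=
  (\max_(S : {set T} | independent_set e S) #|S|)%N.

Definition clique_number (T : finType) (e : rel T) : nat :=
  (\max_(S : {set T} | clique e S) #|S|)%N.

Definition colorable (T : finType) (e : rel T) (k : nat) : bool :=
  [exists f : {ffun T -> 'I_k}, forall x, forall y, e x y ==> (f x != f y)].

Lemma colorable_ex (T : finType) (e : rel T) (irr : irreflexive e) :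
  exists k, colorable e k.
Proof.
exists #|T|; apply/existsP; exists [ffun x => enum_rank x].
apply/forallP => x; apply/forallP => y; apply/implyP => exy.
rewrite !ffunE; apply/negP => /eqP /enum_rank_inj Exy.
by move: exy; rewrite Exy irr.
Qed.

Lemma bil_adj_irr (h m n r : nat) : irreflexive (@bil_adj h m n r).
Proof. by move=> A; rewrite /bil_adj eqxx. Qed.

Definition chromatic_number (T : finType) (e : rel T) (irr : irreflexive e) : nat :=
  ex_minn (colorable_ex irr).

(* Write k = m - r. A matrix whose first k rows vanish factors through its last
   r rows, so these h^(nr) matrices form a clique. The core of the proof is an
   additive map Phi from k x n to m x n matrices over Z_h all of whose nonzero
   values have inner rank > r. Over F_p it is a Gabidulin code: the
   p-linearised polynomial sum_(i<k) a_i X^(p^i) over F_(p^n), evaluated at m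
   points independent over F_p. Such a polynomial has at most p^(k-1) roots, so
   the row space of its evaluation matrix has at least p^(m-k+1) elements,
   while a matrix B C killed by p, with B of width rho, has at most p^rho. The
   codes for the primes p | h are glued with the weights prod_(q <> p) q, and a
   nonzero a is first multiplied into p-torsion for a prime p dividing its
   additive order.
   The image of Phi is independent. Its top block is injective, hence
   bijective, so every matrix is Phi(a) plus a zero-top matrix; this gives the
   colouring A |-> bottom(A - Phi(a)) with h^(nr) colours, and for an
   independent S the sums S + (zero-top matrices) are distinct, whence
   |S| h^(nr) <= h^(mn). *)

From HB Require Import structures.
From mathcomp Require Import all_boot all_order all_algebra all_field.
From mathcomp Require Import zify ring.
Set Implicit Arguments. Unset Strict Implicit. Unset Printing Implicit Defensive.
Import GRing.Theory.
Import VectorInternalTheory.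
Local Open Scope ring_scope.

Section Graphs.
Variables (T : finType) (e : rel T).

Lemma clique_card_le_colorable (S : {set T}) k :
  clique e S -> colorable e k -> (#|S| <= k)%N.
Proof.
move=> /forallP Scl /existsP [f /forallP fP].
rewrite -[k]card_ord -(card_in_imset (f := f)); first exact: max_card.
move=> x y xS yS fxy; apply/eqP; apply: contraT => xy.
have /forallP /(_ y) /implyP /(_ yS) /implyP /(_ xy) exy := implyP (Scl x) xS.
by have /forallP /(_ y) /implyP /(_ exy) := fP x; rewrite fxy eqxx.
Qed.

Lemma clique_colorable_numbers (irr : irreflexive e) (S : {set T}) :
  clique e S -> colorable e #|S| ->
  clique_number e = #|S| /\ chromatic_number irr = #|S|.
Proof.
move=> Scl Scol; split.
  apply/eqP; rewrite eqn_leq (leq_bigmax_cond _ Scl) andbT.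
  by apply/bigmax_leqP => S' S'cl; apply: clique_card_le_colorable Scol.
rewrite /chromatic_number; case: ex_minnP => c colc minc.
by apply/eqP; rewrite eqn_leq minc // (clique_card_le_colorable Scl colc).
Qed.

Lemma independence_number_eq (S : {set T}) :
  independent_set e S ->
  (forall S', independent_set e S' -> (#|S'| <= #|S|)%N) ->
  independence_number e = #|S|.
Proof.
move=> Sind Smax; apply/eqP; rewrite eqn_leq (leq_bigmax_cond _ Sind) andbT.
exact/bigmax_leqP.
Qed.

End Graphs.

Lemma card_imset_mul_ker (T U : finZmodType) (f : T -> U) (A : {set T}) :
  zmod_morphism f ->
  0 \in A -> (forall x y, x \in A -> y \in A -> x - y \in A) ->
  (forall x, f x = 0 -> x \in A) ->
  #|A| = (#|f @: A| * #|[set x | f x == 0%R]|)%N.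
Proof.
move=> fB A0 AB Aker.
pose fM := GRing.isZmodMorphism.Build T U f fB.
pose g : {additive T -> U} := HB.pack f fM.
rewrite -sum1_card (partition_big_imset f) /= -sum_nat_const.
apply: eq_bigr => _ /imsetP [x0 Ax0 ->]; rewrite sum1dep_card.
rewrite -[in RHS](card_imset _ (addrI x0)); apply: eq_card => z; rewrite !inE.
apply/andP/imsetP => [[Az /eqP fz] | [w]].
  exists (z - x0); first by rewrite inE -[f]/(g : _ -> _) raddfB /= fz subrr.
  by rewrite addrC subrK.
rewrite inE => /eqP fw ->; have Aw := Aker w fw.
split; last by rewrite -[f]/(g : _ -> _) raddfD /= fw addr0.
by rewrite -[w]opprK -[- w]sub0r AB // AB.
Qed.

Section RowImage.
Variables (h rho : nat) (U : finZmodType) (f : {additive 'rV['Z_h]_rho -> U}).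
Variable p : nat.
Hypothesis p_gt0 : (0 < p)%N.

Let card_image_le_mulrn : (#|f @: setT| <= p ^ rho * #|[set f z *+ p | z in setT]|)%N.
Proof.
pose lift (w : 'rV['I_p]_rho) : 'rV['Z_h]_rho := map_mx (fun i : 'I_p => (i : nat)%:R) w.
pose g (wx : 'rV['I_p]_rho * U) := f (lift wx.1) + wx.2.
have sub : f @: setT \subset g @: setX setT [set f z *+ p | z in setT].
  apply/subsetP => _ /imsetP [z _ ->]; apply/imsetP.
  pose zdiv : 'rV['Z_h]_rho := map_mx (fun x : 'Z_h => ((x : nat) %/ p)%:R) z.
  exists (map_mx (fun x : 'Z_h => Ordinal (ltn_pmod x p_gt0)) z, f zdiv *+ p).
    by rewrite inE /= in_setT; apply: imset_f.
  rewrite /g /= -raddfMn -raddfD; congr (f _); apply/matrixP => i j.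
  rewrite -scaler_nat !mxE /= -natrM -natrD.
  by rewrite mulnC addnC -divn_eq natr_Zp.
apply: leq_trans (subset_leq_card sub) _; apply: leq_trans (leq_imset_card _ _) _.
by rewrite cardsX cardsT card_mx card_ord mul1n.
Qed.

(* Each row is a lift of an F_p-row plus p times a row, so
   |f @: setT| <= p^rho |(p f) @: setT|; the kernel counts then turn this into
   the bound on the image of the kernel of p f. *)
Lemma card_image_ker_mulrn_le :
  (#|f @: [set z | f z *+ p == 0%R]| <= p ^ rho)%N.
Proof.
pose psi z := f z *+ p.
have fB : forall x y, f (x - y) = f x - f y by exact: raddfB.
have psiB x y : psi (x - y) = psi x - psi y by rewrite /psi raddfB mulrnBl.
set K := [set z | psi z == 0].
have HK : #|K| = (#|f @: K| * #|[set z | f z == 0%R]|)%N.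
  apply: card_imset_mul_ker => // [|x y|x].
  - by rewrite inE /psi raddf0 mul0rn.
  - by rewrite !inE psiB => /eqP -> /eqP ->; rewrite subrr.
  - by rewrite inE /psi => ->; rewrite mul0rn.
have HT := @card_imset_mul_ker _ _ f setT fB (in_setT _)
  (fun _ _ _ _ => in_setT _) (fun _ _ => in_setT _).
have HP := @card_imset_mul_ker _ _ psi setT psiB (in_setT _)
  (fun _ _ _ _ => in_setT _) (fun _ _ => in_setT _).
have pos : (0 < #|[set z | f z == 0%R]| * #|psi @: setT|)%N.
  rewrite muln_gt0; apply/andP; split; apply/card_gt0P.
    by exists 0; rewrite inE raddf0.
  by exists (psi 0); apply: imset_f.
rewrite -(leq_pmul2r pos) mulnA -HK mulnC -HP HT mulnCA [(_ * _)%N]mulnC.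
by rewrite leq_pmul2l ?card_image_le_mulrn //; move: pos; rewrite muln_gt0 => /andP [].
Qed.

End RowImage.

Lemma inner_rank_factor (h m n : nat) (A : 'M['Z_h]_(m, n)) :
  exists (B : 'M_(m, inner_rank A)) (C : 'M_(inner_rank A, n)), A = B *m C.
Proof.
rewrite /inner_rank; case: ex_minnP => rho /existsP [B /existsP [C /eqP ->]] _.
by exists B, C.
Qed.

Lemma inner_rank_le (h m n rho : nat) (A : 'M['Z_h]_(m, n))
  (B : 'M_(m, rho)) (C : 'M_(rho, n)) : A = B *m C -> (inner_rank A <= rho)%N.
Proof.
move=> ABC; rewrite /inner_rank; case: ex_minnP => r _ rmin; apply: rmin.
by apply/existsP; exists B; apply/existsP; exists C; rewrite ABC.
Qed.

Lemma inner_rank_mulrn_le (h m n u : nat) (A : 'M['Z_h]_(m, n)) :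
  (inner_rank (A *+ u) <= inner_rank A)%N.
Proof.
have [B [C ABC]] := inner_rank_factor A.
by apply: (@inner_rank_le _ _ _ _ _ B (C *+ u)); rewrite raddfMn /= -ABC.
Qed.

Lemma card_row_image_le_inner_rank (h m n p : nat) (A : 'M['Z_h]_(m, n)) :
  (0 < p)%N -> A *+ p = 0 ->
  (#|[set y *m A | y : 'rV_m]| <= p ^ inner_rank A)%N.
Proof.
move=> p_gt0 Ap0; have [B [C ABC]] := inner_rank_factor A.
apply: leq_trans (card_image_ker_mulrn_le (mulmxr C) p_gt0).
apply/subset_leq_card/subsetP => _ /imsetP [y _ ->]; apply/imsetP.
exists (y *m B); last by rewrite /= -mulmxA -ABC.
rewrite inE /= -mulmxA -ABC -scaler_nat scalemxAr scaler_nat Ap0.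
by rewrite mulmx0.
Qed.

Section LinearizedCode.
Variables (p : nat) (F : finFieldType).
Hypothesis pcharF : p \in [pchar F].
Local Notation L := (pPrimeCharType pcharF).
Local Notation n := (dim L).
Variables (k m : nat).
Hypotheses (km : (k <= m)%N) (mn : (m <= n)%N).

Let pr_p : prime p := pcharf_prime pcharF.
Local Notation to_row := (@v2r _ L).
Local Notation of_row := (@r2v _ L).

Lemma exprD_pchar_pow i (x y : F) : (x + y) ^+ (p ^ i) = x ^+ (p ^ i) + y ^+ (p ^ i).
Proof.
elim: i => [|i IH]; first by rewrite !expr1.
by rewrite expnSr !exprM IH -!(pFrobenius_autE pcharF) rmorphD.
Qed.

Definition lin_coef (a : 'M['F_p]_(k, n)) (i : 'I_k) : F := of_row (row i a).

Definition lin_poly (a : 'M['F_p]_(k, n)) : {poly F} :=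
  \sum_(i < k) lin_coef a i *: 'X^(p ^ i).

Definition lin_map (a : 'M['F_p]_(k, n)) (x : F) : F := (lin_poly a).[x].

Fact lin_map_is_zmod_morphism a : zmod_morphism (lin_map a).
Proof.
move=> x y; rewrite /lin_map !horner_sum -sumrB; apply: eq_bigr => i _.
rewrite !hornerZ !hornerXn -mulrBr; congr (_ * _).
have := exprD_pchar_pow i (x - y) y; rewrite subrK => ->.
by rewrite addrK.
Qed.

HB.instance Definition _ a :=
  GRing.isZmodMorphism.Build F F (lin_map a) (lin_map_is_zmod_morphism a).

Lemma lin_polyD a b : lin_poly (a + b) = lin_poly a + lin_poly b.
Proof.
rewrite /lin_poly -big_split /=; apply: eq_bigr => i _.
by rewrite /lin_coef raddfD /= raddfD scalerDl.
Qed.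

Lemma coef_lin_poly a j : (lin_poly a)`_j = \sum_(i < k) lin_coef a i * (j == (p ^ i)%N)%:R.
Proof. by rewrite /lin_poly coef_sum; apply: eq_bigr => i _; rewrite coefZ coefXn. Qed.

Lemma lin_poly_eq0 a : (lin_poly a == 0) = (a == 0).
Proof.
apply/idP/idP => [/eqP a0|/eqP ->]; last first.
  by rewrite /lin_poly big1 // => i _; rewrite /lin_coef row0 raddf0 scale0r.
apply/eqP/row_matrixP => i; rewrite row0; apply: (can_inj (@r2vK _ L)).
rewrite raddf0; have /polyP /(_ (p ^ i)%N) := a0.
rewrite coef_lin_poly coef0 (bigD1 i) //= eqxx mulr1 big1 ?addr0 // => i' ni'.
rewrite (_ : (p ^ i == p ^ i')%N = false) ?mulr0 //; apply/negbTE.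
by apply: contra ni' => /eqP /(expnI (prime_gt1 pr_p)) ii'; apply/eqP/val_inj.
Qed.

Lemma size_lin_poly a : (0 < k)%N -> (size (lin_poly a) <= (p ^ k.-1).+1)%N.
Proof.
move=> k_gt0; apply/leq_sizeP => j hj; rewrite coef_lin_poly big1 // => i _.
rewrite (_ : (j == p ^ i)%N = false) ?mulr0 //; apply/negbTE.
rewrite neq_ltn; apply/orP; right; apply: leq_trans hj.
by rewrite ltnS leq_exp2l ?prime_gt1 // -ltnS prednK.
Qed.

(* Row j of lin_code a holds the F_p-coordinates of the linearised polynomial
   of a evaluated at the j-th basis vector of F over F_p. *)
Definition lin_code (a : 'M['F_p]_(k, n)) : 'M['F_p]_(m, n) :=
  \matrix_(j, l) to_row (lin_map a (of_row (delta_mx 0 (widen_ord mn j)))) 0 l.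

Lemma lin_codeD a b : lin_code (a + b) = lin_code a + lin_code b.
Proof.
by apply/matrixP => j l; rewrite !mxE /lin_map lin_polyD hornerD raddfD mxE.
Qed.

Definition code_point (y : 'rV['F_p]_m) : F :=
  of_row (\sum_j y 0 j *: delta_mx 0 (widen_ord mn j)).

Lemma code_point_inj : injective code_point.
Proof.
have widenE (j1 j2 : 'I_m) : (widen_ord mn j1 == widen_ord mn j2) = (j1 == j2) by [].
move=> y y' /(can_inj (@r2vK _ L)) /rowP yy'; apply/rowP => j.
have := yy' (widen_ord mn j); rewrite !summxE (bigD1 j) //= [in RHS](bigD1 j) //=.
rewrite !mxE !eqxx !mulr1 !big1 ?addr0 // => j' j'j; rewrite !mxE /=;
  by rewrite widenE eq_sym (negbTE j'j) mulr0.
Qed.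

Lemma mulmx_lin_code a (y : 'rV['F_p]_m) :
  y *m lin_code a = to_row (lin_map a (code_point y)).
Proof.
rewrite /code_point (raddf_sum of_row) (raddf_sum (lin_map a)) (raddf_sum to_row).
apply/rowP => l; rewrite summxE !mxE; apply: eq_bigr => j _.
rewrite -[y 0 j]natr_Zp scaler_nat (raddfMn of_row) (raddfMn (lin_map a)).
by rewrite (raddfMn to_row) -scaler_nat !mxE.
Qed.

Lemma card_row_image_lin_code a : a != 0 ->
  (p ^ (m - k + 1) <= #|[set y *m lin_code a | y : 'rV['F_p]_m]|)%N.
Proof.
move=> a0; have k_gt0 : (0 < k)%N.
  rewrite lt0n; apply: contraNneq a0 => k0; apply/eqP/matrixP => i.
  by have : (i < 0)%N by rewrite -[0%N]k0.
have := @card_imset_mul_ker 'rV_m _ (mulmxr (lin_code a)) setT (raddfB _) (in_setT _)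
  (fun _ _ _ _ => in_setT _) (fun _ _ => in_setT _).
rewrite cardsT card_mx card_Fp // mul1n.
set im := #|_|; set ker := #|_| => pm.
have ker_le : (ker <= p ^ k.-1)%N.
  have roots_le : (#|[set x | root (lin_poly a) x]| <= p ^ k.-1)%N.
    rewrite -ltnS; apply: leq_trans (size_lin_poly a k_gt0).
    rewrite cardE; apply: max_poly_roots (enum_uniq _).
      by rewrite lin_poly_eq0.
    by apply/allP => x; rewrite mem_enum inE.
  apply: leq_trans roots_le; rewrite /ker -(card_imset _ code_point_inj).
  apply/subset_leq_card/subsetP => x /imsetP [y]; rewrite !inE => /eqP y0 ->.
  by move: y0; rewrite /= mulmx_lin_code -(raddf0 to_row) => /v2r_inj /eqP.
have : (p ^ (m - k + 1) * p ^ k.-1 <= im * p ^ k.-1)%N.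
  rewrite -expnD (_ : (m - k + 1 + k.-1 = m)%N); last by lia.
  by rewrite pm leq_mul2l ker_le orbT.
rewrite leq_pmul2r ?expn_gt0 ?prime_gt0 // => /leq_trans; apply.
by apply/subset_leq_card/subsetP => _ /imsetP [y _ ->]; apply: imset_f.
Qed.

End LinearizedCode.

(* Over F_p the row space of a matrix of rank rho has p^rho elements, so this
   says that Phi is additive and rank (Phi a) >= m - k + 1 for a <> 0, i.e. Phi
   is a maximum rank distance code. *)
Definition is_mrd_code p k m n
    (Phi : {ffun 'M['F_p]_(k, n) -> 'M['F_p]_(m, n)}) : bool :=
  [forall a, forall b, Phi (a + b) == Phi a + Phi b] &&
  [forall a, (a != 0) ==>
     (p ^ (m - k + 1) <= #|[set y *m Phi a | y : 'rV['F_p]_m]|)%N].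

Lemma exists_mrd_code p k m n : prime p -> (k <= m)%N -> (m <= n)%N ->
  exists Phi, @is_mrd_code p k m n Phi.
Proof.
move=> pr_p km mn; have [-> | n_gt0] := posnP n.
  exists [ffun=> 0]; apply/andP; split.
    by apply/forallP => a; apply/forallP => b; rewrite !ffunE addr0.
  by apply/forallP => a; apply/implyP; rewrite thinmx0 eqxx.
have [F pcharF cardF] := pPrimePowerField pr_p n_gt0.
have dimL : dim (pPrimeCharType pcharF) = n.
  by rewrite -dimvf pprimeChar_dimf cardF pfactorK.
rewrite -dimL in mn *.
exists [ffun a => lin_code mn a]; apply/andP; split.
  by apply/forallP => a; apply/forallP => b; rewrite !ffunE lin_codeD.
by apply/forallP => a; apply/implyP; rewrite ffunE; apply: card_row_image_lin_code.
Qed.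

Definition mrd_code p k m n : {ffun 'M['F_p]_(k, n) -> 'M['F_p]_(m, n)} :=
  odflt [ffun=> 0] [pick Phi | is_mrd_code Phi].

Section MrdCode.
Variables (p k m n : nat).
Hypotheses (pr_p : prime p) (km : (k <= m)%N) (mn : (m <= n)%N).

Lemma mrd_codeP : is_mrd_code (mrd_code p k m n).
Proof.
rewrite /mrd_code; case: pickP => [Phi -> //| no_code].
by have [Phi] := exists_mrd_code pr_p km mn; rewrite no_code.
Qed.

Lemma mrd_codeD a b : mrd_code p k m n (a + b) = mrd_code p k m n a + mrd_code p k m n b.
Proof. by case/andP: mrd_codeP => /forallP /(_ a) /forallP /(_ b) /eqP. Qed.

Lemma mrd_code_is_zmod_morphism : zmod_morphism (mrd_code p k m n).
Proof. by move=> a b; apply/eqP; rewrite eq_sym subr_eq -mrd_codeD subrK. Qed.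

Lemma card_row_image_mrd_code a : a != 0 ->
  (p ^ (m - k + 1) <= #|[set y *m mrd_code p k m n a | y : 'rV['F_p]_m]|)%N.
Proof. by case/andP: mrd_codeP => _ /forallP /(_ a) /implyP. Qed.

End MrdCode.

(* For c = (h %/ p) * w with w coprime to p this is an additive embedding of
   F_p-matrices into the p-torsion of Z_h-matrices. *)
Definition torsion_embed (h : nat) {p : nat} (c : nat) {k n : nat}
    (v : 'M['F_p]_(k, n)) : 'M['Z_h]_(k, n) :=
  map_mx (fun x : 'F_p => (c * x)%:R) v.

Section Torsion.
Variable h : nat.
Hypothesis h_gt1 : (1 < h)%N.

Lemma Zp_nat_eq0 x : ((x%:R : 'Z_h) == 0) = (h %| x)%N.
Proof.
apply/eqP/idP => [x0 | /eqP hx].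
  by have := val_Zp_nat h_gt1 x; rewrite x0 /= => /esym /eqP.
by apply/val_inj; rewrite /= val_Zp_nat // hx.
Qed.

Lemma exists_prime_order_multiple k n (A : 'M['Z_h]_(k, n)) : A != 0 ->
  exists p u, [/\ prime p, (p %| h)%N, A *+ u != 0 & A *+ u *+ p = 0].
Proof.
move=> A0.
have Ah : A *+ h = 0.
  apply/matrixP => i t; rewrite -scaler_nat !mxE mulr_natl Zp_mulrn -Zp_nat.
  by apply/eqP; rewrite Zp_nat_eq0 dvdn_mull.
have exP : exists d, (0 < d)%N && (A *+ d == 0).
  by exists h; rewrite Ah eqxx andbT ltnW.
case: (ex_minnP exP) => d /andP [d_gt0 /eqP Ad] dmin.
have ord_min u : (0 < u)%N -> A *+ u = 0 -> (d <= u)%N.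
  by move=> u_gt0 Au; apply: dmin; rewrite u_gt0 Au eqxx.
have d_dvd_h : (d %| h)%N.
  rewrite /dvdn; case: posnP => // hd_gt0.
  suff : (d <= h %% d)%N by rewrite leqNgt ltn_pmod.
  apply: ord_min hd_gt0 _.
  by move: Ah; rewrite [X in A *+ X](divn_eq h d) mulrnDr mulnC mulrnA Ad mul0rn add0r.
have d_gt1 : (1 < d)%N.
  rewrite ltn_neqAle d_gt0 andbT; apply: contra A0 => /eqP d1.
  by rewrite -[A]mulr1n d1 Ad.
have pr_p := pdiv_prime d_gt1; have p_dvd_d := pdiv_dvd d.
exists (pdiv d), (d %/ pdiv d)%N; split.
- exact: pr_p.
- exact: dvdn_trans d_dvd_h.
- have u_gt0 : (0 < d %/ pdiv d)%N by rewrite divn_gt0 ?prime_gt0 // dvdn_leq.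
  by apply/eqP => /(ord_min _ u_gt0); rewrite leqNgt ltn_Pdiv ?prime_gt1.
- by rewrite -mulrnA divnK.
Qed.

Section TorsionPrime.
Variable p : nat.
Hypotheses (pr_p : prime p) (p_dvd_h : (p %| h)%N).

Lemma natr_torsion_mod c x :
  ((h %/ p * c * (x %% p))%:R : 'Z_h) = (h %/ p * c * x)%:R.
Proof.
rewrite [in RHS](divn_eq x p) mulnDr natrD [X in _ = X + _](_ : _ = 0) ?add0r //.
apply/eqP; rewrite Zp_nat_eq0 -[h in (h %| _)%N](divnK p_dvd_h).
rewrite (_ : (h %/ p * c * (x %/ p * p) = h %/ p * p * (c * (x %/ p)))%N).
  exact: dvdn_mulr.
by ring.
Qed.

Lemma torsion_embed_onto k n (B : 'M['Z_h]_(k, n)) : B *+ p = 0 ->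
  exists v : 'M['F_p]_(k, n), B = torsion_embed h (h %/ p)%N v.
Proof.
move=> Bp0; have hpE : (h %/ p * p = h)%N by rewrite divnK.
have hp_gt0 : (0 < h %/ p)%N by rewrite divn_gt0 ?prime_gt0 // dvdn_leq // ltnW.
have entry_dvd i t : (h %/ p %| B i t)%N.
  have /matrixP /(_ i t) := Bp0; rewrite -scaler_nat !mxE mulr_natl Zp_mulrn -Zp_nat.
  move/eqP; rewrite Zp_nat_eq0 -{1}hpE dvdn_pmul2r ?prime_gt0 //.
exists (\matrix_(i, t) ((B i t : nat) %/ (h %/ p))%:R); apply/matrixP => i t.
rewrite !mxE val_Fp_nat // modn_small.
  by rewrite mulnC divnK ?entry_dvd // natr_Zp.
by rewrite ltn_divLR // mulnC hpE -[h in (_ < h)%N]Zp_cast.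
Qed.

Lemma torsion_embed_mulmx c m n (y : 'rV['F_p]_m) (X : 'M['F_p]_(m, n)) :
  torsion_embed h (h %/ p * c)%N (y *m X) =
  map_mx (fun x : 'F_p => (x : nat)%:R) y *m torsion_embed h (h %/ p * c)%N X.
Proof.
apply/rowP => l; rewrite !mxE.
have -> : \sum_j y 0 j * X j l = ((\sum_j (y 0%R j : nat) * (X j l : nat))%N%:R : 'F_p).
  by rewrite natr_sum; apply: eq_bigr => j _; rewrite natrM !natr_Zp.
rewrite val_Fp_nat // natr_torsion_mod big_distrr natr_sum.
by apply: eq_bigr => j _; rewrite !mxE -natrM mulnCA.
Qed.

Lemma torsion_embed_inj c m n : coprime p c ->
  injective (torsion_embed h (h %/ p * c)%N : 'M['F_p]_(m, n) -> 'M['Z_h]_(m, n)).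
Proof.
move=> p_co_c.
have lift_inj : injective (fun x : 'F_p => (h %/ p * c * x)%:R : 'Z_h).
  move=> a b; wlog ab : a b / (a <= b)%N => [sym | ].
    by case: (leqP a b) => [/sym // | /ltnW /sym sym' /esym /sym' ->].
  move=> /= /(congr1 val); rewrite /= !val_Zp_nat // => /eqP.
  rewrite eq_sym eqn_mod_dvd ?leq_mul2l ?ab ?orbT // -mulnBr.
  rewrite -[h in (h %| _)%N](divnK p_dvd_h) -mulnA dvdn_pmul2l; last first.
    by rewrite divn_gt0 ?prime_gt0 // dvdn_leq // ltnW.
  rewrite Gauss_dvdr // => p_dvd; apply/val_inj/eqP; rewrite eqn_leq ab /=.
  rewrite -subn_eq0; apply: contraTT p_dvd => nz; rewrite gtnNdvd ?lt0n //.
  by apply: leq_ltn_trans (leq_subr _ _) _; rewrite -[p in (_ < p)%N](Fp_cast pr_p).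
move=> X Y /matrixP XY; apply/matrixP => i j; apply: lift_inj.
by have := XY i j; rewrite !mxE.
Qed.

Lemma card_row_image_torsion_embed c m n (X : 'M['F_p]_(m, n)) : coprime p c ->
  (#|[set y *m X | y : 'rV_m]| <=
   #|[set y *m torsion_embed h (h %/ p * c)%N X | y : 'rV['Z_h]_m]|)%N.
Proof.
move=> p_co_c; rewrite -(card_imset _ (torsion_embed_inj p_co_c)).
apply/subset_leq_card/subsetP => _ /imsetP [_ /imsetP [y _ ->] ->].
by rewrite torsion_embed_mulmx; apply: imset_f.
Qed.

End TorsionPrime.

Lemma exists_torsion_multiple k n (A : 'M['Z_h]_(k, n)) : A != 0 ->
  exists p u (v : 'M['F_p]_(k, n)),
    [/\ prime p, (p %| h)%N, v != 0 & A *+ u = torsion_embed h (h %/ p)%N v].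
Proof.
move=> /exists_prime_order_multiple [p [u [pr_p p_dvd_h Au0 Aup]]].
have [v Av] := torsion_embed_onto pr_p p_dvd_h Aup.
exists p, u, v; split => //.
apply: contra Au0 => /eqP v0; apply/eqP/matrixP => i t.
by rewrite Av v0 !mxE muln0.
Qed.

End Torsion.

Section GluedCode.
Variables h k m n : nat.

(* For a prime p | h, crt_weight q is divisible by p when q <> p, so on the
   p-torsion of Z_h only the p-th summand of glued_coef survives
   (glued_code_torsion). *)
Definition crt_weight (q : nat) : nat := \prod_(q' <- primes h | q' != q) q'.

Definition glued_coef (j : 'I_m) (l : 'I_n) (i : 'I_k) (t : 'I_n) : 'Z_h :=
  (\sum_(q <- primes h) crt_weight q * (mrd_code q k m n (delta_mx i t) j l : nat))%:R.

Definition glued_code (a : 'M['Z_h]_(k, n)) : 'M['Z_h]_(m, n) :=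
  \matrix_(j, l) \sum_i \sum_t a i t * glued_coef j l i t.

Fact glued_code_is_zmod_morphism : zmod_morphism glued_code.
Proof.
move=> a b; apply/matrixP => j l; rewrite !mxE -sumrB; apply: eq_bigr => i _.
by rewrite -sumrB; apply: eq_bigr => t _; rewrite -mulrBl !mxE.
Qed.

HB.instance Definition _ :=
  GRing.isZmodMorphism.Build _ _ glued_code glued_code_is_zmod_morphism.

End GluedCode.

Arguments glued_coef h {k m n}.
Arguments glued_code h {k} m {n}.

Section GluedCodeRank.
Variables h k m n : nat.
Hypotheses (h_gt1 : (1 < h)%N) (km : (k <= m)%N) (mn : (m <= n)%N).

Lemma dvdn_crt_weight p q : prime p -> (p %| h)%N ->
  q \in primes h -> q != p -> (p %| crt_weight h q)%N.
Proof.
move=> pr_p p_dvd_h qh qp; rewrite /crt_weight -big_filter (bigD1_seq p) /=.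
- exact: dvdn_mulr.
- by rewrite mem_filter eq_sym qp mem_primes pr_p p_dvd_h ltnW.
- by rewrite filter_uniq ?primes_uniq.
Qed.

Lemma coprime_crt_weight p : prime p -> coprime p (crt_weight h p).
Proof.
move=> pr_p; rewrite /crt_weight big_seq_cond.
elim/big_ind: _ => [|x y|q /andP []]; first by rewrite coprimen1.
  by rewrite coprimeMr => -> ->.
rewrite mem_primes => /and3P [pr_q _ _] qp.
by rewrite prime_coprime // dvdn_prime2 // eq_sym.
Qed.

Lemma glued_code_torsion p (v : 'M['F_p]_(k, n)) : prime p -> (p %| h)%N ->
  glued_code h m (torsion_embed h (h %/ p)%N v) =
  torsion_embed h (h %/ p * crt_weight h p)%N (mrd_code p k m n v).
Proof.
move=> pr_p p_dvd_h; have ph : p \in primes h by rewrite mem_primes pr_p p_dvd_h ltnW.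
pose Phi : {additive _ -> _} := HB.pack (mrd_code p k m n : _ -> _)
  (GRing.isZmodMorphism.Build _ _ _ (mrd_code_is_zmod_morphism pr_p km mn)).
pose w := crt_weight h p.
have coefE i t j l : ((h %/ p)%N * (v i t : nat))%:R * glued_coef h j l i t =
    ((h %/ p * w)%N * ((v i t : nat) * (Phi (delta_mx i t) j l : nat)))%:R.
  rewrite /glued_coef -natrM big_distrr /= natr_sum.
  rewrite (bigD1_seq p) ?primes_uniq //= big_seq_cond big1 ?addr0.
    by congr (_%:R); rewrite /w; ring.
  move=> q /andP [qh qp]; apply/eqP; rewrite Zp_nat_eq0 //.
  have [u ->] : exists u, crt_weight h q = (u * p)%N.
    by exists (crt_weight h q %/ p)%N; rewrite divnK // dvdn_crt_weight.
  rewrite -[h in (h %| _)%N](divnK p_dvd_h); apply: dvdn_mul; first exact: dvdn_mulr.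
  by rewrite mulnAC dvdn_mull.
apply/matrixP => j l; rewrite !mxE.
under eq_bigr => i _ do under eq_bigr => t _ do rewrite mxE coefE.
under eq_bigr => i _ do rewrite -natr_sum -big_distrr /=.
rewrite -natr_sum -big_distrr /= -(natr_torsion_mod h_gt1 p_dvd_h) -val_Fp_nat //.
congr (_ * (nat_of_ord _))%:R.
rewrite [in RHS](matrix_sum_delta v) -[mrd_code p k m n _]/(Phi _) (raddf_sum Phi).
rewrite summxE natr_sum.
apply: eq_bigr => i _; rewrite (raddf_sum Phi) summxE natr_sum.
apply: eq_bigr => t _; rewrite -[v i t]natr_Zp scaler_nat (raddfMn Phi) -scaler_nat mxE.
by rewrite !natr_Zp natrM !natr_Zp.
Qed.

Lemma inner_rank_glued_code_gt (a : 'M['Z_h]_(k, n)) : a != 0 ->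
  (m - k < inner_rank (glued_code h m a))%N.
Proof.
move=> a0; have [p [u [v [pr_p p_dvd_h v0 au]]]] := exists_torsion_multiple h_gt1 a0.
pose c := (h %/ p * crt_weight h p)%N.
have codeE : glued_code h m a *+ u = torsion_embed h c (mrd_code p k m n v).
  by rewrite -raddfMn /= au glued_code_torsion.
have codep : glued_code h m a *+ u *+ p = 0.
  apply/matrixP => i j; rewrite codeE -scaler_nat !mxE mulr_natl -mulr_natr -natrM.
  apply/eqP; rewrite Zp_nat_eq0 // -[h in (h %| _)%N](divnK p_dvd_h) mulnAC -mulnA.
  by rewrite dvdn_mul ?dvdn_mulr.
have := card_row_image_mrd_code pr_p km mn v0.
move/leq_trans/(_ (card_row_image_torsion_embed h_gt1 pr_p p_dvd_h _
  (coprime_crt_weight pr_p))).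
rewrite -codeE => /leq_trans /(_ (card_row_image_le_inner_rank (prime_gt0 pr_p) codep)).
rewrite leq_exp2l ?prime_gt1 // addn1 => /leq_trans; apply.
exact: inner_rank_mulrn_le.
Qed.

End GluedCodeRank.

Section RowBlocks.
Variables (R : nzRingType) (m n r : nat).
Hypothesis r_le_m : (r <= m)%N.
Local Notation k := (m - r)%N.

Definition top_rows (A : 'M[R]_(m, n)) : 'M[R]_(k, n) :=
  \matrix_(i, l) A (widen_ord (leq_subr r m) i) l.

Lemma bottom_row_proof (i : 'I_r) : (k + i < m)%N.
Proof. by have := ltn_ord i; lia. Qed.

Definition bottom_rows (A : 'M[R]_(m, n)) : 'M[R]_(r, n) :=
  \matrix_(i, l) A (Ordinal (bottom_row_proof i)) l.

Definition bottom_embed : 'M[R]_(m, r) := \matrix_(j, i) ((j : nat) == k + i)%N%:R.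

Lemma top_rowsB A B : top_rows (A - B) = top_rows A - top_rows B.
Proof. by apply/matrixP => i l; rewrite !mxE. Qed.

Lemma bottom_rowsB A B : bottom_rows (A - B) = bottom_rows A - bottom_rows B.
Proof. by apply/matrixP => i l; rewrite !mxE. Qed.

Lemma top_bottom_rows_inj A B :
  top_rows A = top_rows B -> bottom_rows A = bottom_rows B -> A = B.
Proof.
move=> /matrixP topAB /matrixP botAB; apply/matrixP => j l.
have [jk | kj] := ltnP j k.
  by have := topAB (Ordinal jk) l; rewrite !mxE (_ : widen_ord _ _ = j) //; apply: val_inj.
have jr : (j - k < r)%N by have := ltn_ord j; lia.
have := botAB (Ordinal jr) l; rewrite !mxE (_ : Ordinal _ = j) //.
by apply: val_inj => /=; lia.
Qed.

Lemma top_rows_embed X : top_rows (bottom_embed *m X) = 0.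
Proof.
apply/matrixP => i l; rewrite !mxE big1 // => i' _; rewrite mxE.
by rewrite (_ : (_ == _)%N = false) ?mul0r //=; apply/negbTE; have := ltn_ord i; lia.
Qed.

Lemma bottom_rows_embed X : bottom_rows (bottom_embed *m X) = X.
Proof.
apply/matrixP => i l; rewrite !mxE (bigD1 i) //= mxE eqxx mul1r big1 ?addr0 // => i' ii'.
rewrite mxE (_ : (k + i == k + i')%N = false) ?mul0r //.
by rewrite eqn_add2l; apply/negbTE; apply: contra ii' => /eqP ii'; apply/eqP/val_inj.
Qed.

Lemma top_rows_eq0 A : top_rows A = 0 -> A = bottom_embed *m bottom_rows A.
Proof.
by move=> A0; apply: top_bottom_rows_inj; rewrite ?top_rows_embed ?bottom_rows_embed.
Qed.

End RowBlocks.

Section BilinearFormsGraph.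
Variables (h m n r : nat).
Hypotheses (h_gt1 : (1 < h)%N) (r_le_m : (r <= m)%N).
Local Notation k := (m - r)%N.
Local Notation bil := (@bil_adj h m n r).
Variable Phi : {additive 'M['Z_h]_(k, n) -> 'M['Z_h]_(m, n)}.
Hypothesis Phi_rank : forall a, a != 0 -> (r < inner_rank (Phi a))%N.

Local Notation zero_top := [set A : 'M['Z_h]_(m, n) | top_rows r A == 0].

Lemma card_matrix_Zp p q : #|{: 'M['Z_h]_(p, q)}| = (h ^ (q * p))%N.
Proof. by rewrite card_mx card_ord Zp_cast // mulnC. Qed.

Lemma inner_rank_top_rows0 (A : 'M['Z_h]_(m, n)) : top_rows r A = 0 -> (inner_rank A <= r)%N.
Proof. by move=> A0; apply: inner_rank_le (top_rows_eq0 r_le_m A0). Qed.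

Lemma zero_top_clique : clique bil zero_top.
Proof.
apply/forallP => A; apply/implyP; rewrite inE => /eqP A0.
apply/forallP => B; apply/implyP; rewrite inE => /eqP B0; apply/implyP => AB.
by rewrite /bil_adj AB inner_rank_top_rows0 // top_rowsB A0 B0 subrr.
Qed.

Lemma card_zero_top : #|zero_top| = (h ^ (n * r))%N.
Proof.
have -> : zero_top = [set bottom_embed _ m r *m X | X : 'M_(r, n)].
  apply/setP => A; rewrite inE; apply/eqP/imsetP => [A0 | [X _ ->]].
    by exists (bottom_rows r_le_m A) => //; apply: top_rows_eq0.
  exact: top_rows_embed.
rewrite card_imset ?card_matrix_Zp // => X Y XY.
by rewrite -(bottom_rows_embed r_le_m X) XY bottom_rows_embed.
Qed.

Let top_code a := top_rows r (Phi a).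

Lemma top_code_inj : injective top_code.
Proof.
move=> a b ab; apply/eqP; rewrite -subr_eq0; apply: contraT => nz.
have := Phi_rank nz; rewrite ltnNge inner_rank_top_rows0 //.
by rewrite raddfB top_rowsB -/(top_code a) ab subrr.
Qed.

Lemma code_independent : independent_set bil [set Phi a | a in setT].
Proof.
apply/forallP => x; apply/implyP => /imsetP [a _ ->].
apply/forallP => y; apply/implyP => /imsetP [b _ ->].
rewrite /bil_adj negb_and negbK -ltnNge -raddfB.
have [-> | ab] := eqVneq a b; first by rewrite eqxx.
by rewrite Phi_rank ?orbT // subr_eq0.
Qed.

Lemma card_code : #|[set Phi a | a in setT]| = (h ^ (n * k))%N.
Proof.
rewrite card_imset ?cardsT ?card_matrix_Zp // => a b ab.
by apply: top_code_inj; rewrite /top_code ab.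
Qed.

Lemma independent_card_le S : independent_set bil S -> (#|S| <= h ^ (n * k))%N.
Proof.
move=> /forallP Sind.
have sum_inj : {in setX S zero_top &, injective (fun AB => AB.1 + AB.2)}.
  move=> [A B] [A' B'] /setXP [AS]; rewrite inE => /eqP B0.
  move=> /setXP [A'S]; rewrite inE => /eqP B'0 /= sumE.
  have AA' : A = A'.
    apply/eqP; have /forallP /(_ A') /implyP /(_ A'S) := implyP (Sind A) AS.
    rewrite /bil_adj negb_and negbK => /orP [// | ]; rewrite inner_rank_top_rows0 //.
    have -> : A - A' = B' - B by rewrite -(addrK B A) sumE addrAC [A' + B']addrC addrK.
    by rewrite top_rowsB B0 B'0 subrr.
  by move: sumE; rewrite AA' => /addrI ->.
have := max_card (imset (fun AB => AB.1 + AB.2) (mem (setX S zero_top))).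
rewrite card_in_imset // cardsX card_zero_top card_matrix_Zp.
by rewrite -[X in (_ <= h ^ (n * X))%N](subnK r_le_m) mulnDr expnD leq_pmul2r // expn_gt0 ltnW.
Qed.

Lemma bil_colorable : colorable bil (h ^ (n * r)).
Proof.
pose code_of A := invF top_code_inj (top_rows r A).
pose color A := bottom_rows r_le_m (A - Phi (code_of A)).
have top_color A : top_rows r (A - Phi (code_of A)) = 0.
  by rewrite top_rowsB -/(top_code _) f_invF subrr.
have color_ok A B : bil A B -> color A != color B.
  case/andP => AB rAB; apply/negP => /eqP cAB.
  have E : A - Phi (code_of A) = B - Phi (code_of B).
    by apply: (top_bottom_rows_inj (r_le_m := r_le_m)); rewrite ?top_color.
  have {}E : A - B = Phi (code_of A - code_of B).
    move: E; rewrite raddfB; set x := Phi _; set y := Phi _ => E.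
    by rewrite -(subrK x A) E addrAC [B - y - B]addrAC subrr add0r addrC.
  have [ab | ab] := eqVneq (code_of A) (code_of B).
    by move: AB; rewrite -subr_eq0 E ab subrr raddf0 eqxx.
  by move: rAB; rewrite E leqNgt Phi_rank // subr_eq0.
have card_colors : #|'M['Z_h]_(r, n)| = (h ^ (n * r))%N by exact: card_matrix_Zp.
apply/existsP; exists [ffun A => cast_ord card_colors (enum_rank (color A))].
apply/forallP => A; apply/forallP => B; apply/implyP => AB; rewrite !ffunE.
by apply: contra (color_ok _ _ AB) => /eqP /cast_ord_inj /enum_rank_inj ->.
Qed.

End BilinearFormsGraph.

Theorem theorem3p4 (h m n r : nat) (h_gt1 : (1 < h)%N)
    (r_ge1 : (1 <= r)%N) (r_le_m : (r <= m)%N) (m_le_n : (m <= n)%N) :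
  independence_number (@bil_adj h m n r) = (h ^ (n * (m - r)))%N /\
  clique_number (@bil_adj h m n r) = (h ^ (n * r))%N /\
  chromatic_number (@bil_adj_irr h m n r) = (h ^ (n * r))%N.
Proof.
have code_rank (a : 'M['Z_h]_(m - r, n)) : a != 0 -> (r < inner_rank (glued_code h m a))%N.
  by move=> a0; have := inner_rank_glued_code_gt h_gt1 (leq_subr r m) m_le_n a0; rewrite subKn.
have card_image := card_code h_gt1 r_le_m code_rank.
split.
  rewrite -card_image; apply: independence_number_eq; first exact: code_independent.
  by move=> S /(independent_card_le h_gt1 r_le_m); rewrite card_image.
rewrite -(card_zero_top n h_gt1 r_le_m); apply: clique_colorable_numbers.
  exact: zero_top_clique.
by rewrite card_zero_top //; apply: bil_colorable code_rank.
Qed.
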